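(* Let $G=(V,E)$ be a connected graph with $n=|V|\ge 2$, edge weights $w$ and edge costs $c$. Let $F\subseteq E$ be such that $G\setminus F$ is connected, with cost $B=c(F)$ and profit $\Delta=p_G(F)$. Then there exist an integer $t\le n$ and partial cuts $C_1,\dots,C_{t-1}$ in $G$ (each of the form $C_G(S_i,W_i)$) such that $\sum_{i=1}^{t-1}c(C_i)\le 2B\log n$ and $\sum_{i=1}^{t-1}p_G(C_i)\ge\Delta$.
   Context: $G=(V,E)$ is a finite undirected graph (parallel edges allowed) with edge weights $w:E\to\mathbb{R}_{\ge0}$ and removal costs $c:E\to\mathbb{R}_{>0}$; $c(F)=\sum_{f\in F}c(f)$; $G\setminus F=(V,E\setminus F)$. $\mathrm{MST}(H)$ is the weight of a minimum spanning tree of $H$ w.r.t. $w$, with $\mathrm{MST}(H)=\infty$ if $H$ is disconnected. The profit is $p_G(F)=\mathrm{MST}(G\setminus F)-\mathrm{MST}(G)$. For $\emptyset\ne S\subsetneq V$, the complete cut is $C_G(S)=\{e\in E:|e\cap S|=1\}$ and, for $W\in\mathbb{R}$, the partial cut is $C_G(S,W)=\{e\in C_G(S):w(e)<W\}$. $\log$ denotes $\log_2$. *)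

From HB Require Import structures.
From mathcomp Require Import all_boot all_order all_algebra.
From mathcomp Require Import all_classical all_reals all_analysis.
Set Implicit Arguments. Unset Strict Implicit. Unset Printing Implicit Defensive.
Import Order.TTheory GRing.Theory Num.Theory.
Local Open Scope ring_scope.

(* A multigraph G = (V, E): E is a finite type of edge names, each edge e
   has two endpoints ends e = (u, v).  Parallel edges are allowed. *)
Section Graph.
Variables (R : realType) (V E : finType) (ends : E -> V * V) (w : E -> R).

Definition adj (A : {set E}) : rel V :=
  fun u v => [exists e in A, (ends e == (u, v)) || (ends e == (v, u))].

Definition connectedE (A : {set E}) : Prop := forall u v : V, connect (adj A) u v.

Definition spanning_tree (A T : {set E}) : bool :=
  [&& T \subset A, [forall u, forall v, connect (adj T) u v] & #|T| == #|V|.-1].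

(* MST weight of (V, A); +oo if there is no spanning tree (disconnected) *)
Definition MST (A : {set E}) : \bar R :=
  \big[Order.min/+oo%E]_(T : {set E} | spanning_tree A T) ((\sum_(e in T) w e)%:E).

Definition profit (F : {set E}) : \bar R := (MST (~: F) - MST [set: E])%E.

Definition cut (S : {set V}) : {set E} :=
  [set e | ((ends e).1 \in S) != ((ends e).2 \in S)].

Definition pcut (S : {set V}) (W : R) : {set E} := [set e in cut S | w e < W].

End Graph.

Definition cost (R : realType) (E : finType) (c : E -> R) (F : {set E}) : R :=
  \sum_(e in F) c e.

Definition log2 (R : realType) (x : R) : R := ln x / ln 2.

From HB Require Import structures.
From mathcomp Require Import all_boot all_order all_algebra zify ring lra.
Set Implicit Arguments. Unset Strict Implicit. Unset Printing Implicit Defensive.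
Import Order.TTheory GRing.Theory Num.Theory.

(* Run Kruskal's algorithm on G \ F.  When it adds its i-th edge, of weight W_i,
   joining two components of the current forest, let S_i be the smaller of the two.
   Edges of G \ F lighter than W_i lie inside components, so C(S_i, W_i) is a
   subset of F; and a vertex lies in the smaller side at most log n times, since
   its component doubles each time, so every edge of F is in at most 2 log n of
   the cuts.  For the profit, write the MST weight of (V, A) as the integral over
   x of k(A_{<x}) - 1, where k counts components and A_{<x} keeps the edges of
   weight below x.  At each level x, replaying the Kruskal merges above x shows
   that k((G \ F)_{<x}) - k(G_{<x}) is at most the number of pairs (i, K) with K
   a component of G_{<x} split by S_i, while deleting C_i from G_{<x} adds at
   least that many components for each i.  Integrating over x gives
   sum_i p(C_i) >= p(F).  There are n - 1 Kruskal steps, whence t = n. *)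

Section Components.
Variables (V E : finType) (ends : E -> V * V).
Local Notation adj := (adj ends).
Local Notation cut := (cut ends).

Definition conn (A : {set E}) u v := connect (adj A) u v.
Definition cc (A : {set E}) u := [set v | conn A u v].
Definition comps (A : {set E}) := [set cc A u | u : V].
Definition ncomp (A : {set E}) := #|comps A|.

Lemma adj_sym (A : {set E}) : symmetric (adj A).
Proof.
move=> u v; apply/existsP/existsP => -[e /andP[eA H]]; exists e;
  by rewrite eA /= orbC.
Qed.

Lemma conn_sym (A : {set E}) u v : conn A u v = conn A v u.
Proof. exact: (sym_connect_sym (adj_sym A)). Qed.

Lemma conn_refl (A : {set E}) u : conn A u u.
Proof. exact: connect0. Qed.

Lemma conn_trans (A : {set E}) u v x : conn A u v -> conn A v x -> conn A u x.
Proof. exact: connect_trans. Qed.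

Lemma conn_eqr (A : {set E}) x y z : conn A x y -> conn A z x = conn A z y.
Proof.
move=> H; apply/idP/idP => H2; first exact: conn_trans H2 H.
by apply: conn_trans H2 _; rewrite conn_sym.
Qed.

Lemma conn_eql (A : {set E}) x y z : conn A x y -> conn A x z = conn A y z.
Proof. by move=> H; rewrite conn_sym (conn_eqr _ H) conn_sym. Qed.

Lemma conn_edge (A : {set E}) e : e \in A -> conn A (ends e).1 (ends e).2.
Proof.
by move=> eA; apply/connect1/existsP; exists e; rewrite eA -surjective_pairing eqxx.
Qed.

Lemma adj_edge (A : {set E}) u v : adj A u v ->
  exists2 e, e \in A & (ends e = (u, v) \/ ends e = (v, u)).
Proof.
by case/existsP => e /andP[eA /orP[/eqP H|/eqP H]]; exists e => //; [left|right].
Qed.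

Lemma conn_sub_edges (A B : {set E}) :
  (forall e, e \in B -> conn A (ends e).1 (ends e).2) ->
  forall u v, conn B u v -> conn A u v.
Proof.
move=> H u v; apply: connect_sub => x y /adj_edge [e eB [He|He]];
  have := H e eB; rewrite He //= conn_sym //.
Qed.

Lemma connS (A B : {set E}) u v : A \subset B -> conn A u v -> conn B u v.
Proof.
by move=> AB; apply: conn_sub_edges => e eA; apply/conn_edge/(subsetP AB).
Qed.

Lemma conn_set0 u v : conn set0 u v -> u = v.
Proof.
have cl : closed (adj set0) (pred1 u) by move=> x y /adj_edge [f]; rewrite inE.
by move/(closed_connect cl); rewrite !inE eqxx => /esym/eqP.
Qed.

Lemma mem_cc (A : {set E}) u v : (v \in cc A u) = conn A u v.
Proof. by rewrite inE. Qed.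

Lemma cc_eqP (A : {set E}) u v : reflect (cc A u = cc A v) (conn A u v).
Proof.
apply: (iffP idP) => [H|H]; first by apply/setP => x; rewrite !inE (conn_eql _ H).
by have := conn_refl A v; rewrite -mem_cc -H mem_cc.
Qed.

Lemma cc_id (A : {set E}) u : u \in cc A u.
Proof. by rewrite mem_cc conn_refl. Qed.

Lemma cc_in_comps (A : {set E}) u : cc A u \in comps A.
Proof. exact: imset_f. Qed.

Lemma conn_setU1 (A : {set E}) e u v : conn (e |: A) u v ->
  conn A u v ||
  ((conn A u (ends e).1 || conn A u (ends e).2) &&
   (conn A v (ends e).1 || conn A v (ends e).2)).
Proof.
set a := (ends e).1; set b := (ends e).2.
set P := [pred x | conn A u x || ((conn A u a || conn A u b) &&
                                   (conn A x a || conn A x b))].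
have cl : closed (adj (e |: A)) P.
  move=> x y /adj_edge [f]; rewrite in_setU1 /P !inE => /orP[/eqP->|fA] H.
    have : (a = x /\ b = y) \/ (a = y /\ b = x).
      by rewrite /a /b; case: H => ->; [left|right].
    by case=> -[-> ->]; rewrite !conn_refl !orbT !andbT;
      case: (conn A u x); case: (conn A u y).
  have Hxy : conn A x y by case: H => H; have := conn_edge fA; rewrite H //= conn_sym.
  by rewrite (conn_eqr _ Hxy) (conn_eql _ Hxy) (conn_eql _ Hxy).
by move/(closed_connect cl); rewrite !inE conn_refl /= => <-.
Qed.

Lemma cc_closure (A' A : {set E}) u : A' \subset A ->
  [set v | [exists y in cc A' u, conn A y v]] = cc A u.
Proof.
move=> sub; apply/setP => v; rewrite !inE; apply/existsP/idP => [[x /andP[]]|H].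
  by rewrite mem_cc => H1 H2; apply: conn_trans H2; apply: connS H1.
by exists u; rewrite cc_id.
Qed.

Lemma ncomp_refine (A' A : {set E}) : A' \subset A ->
  ncomp A' = \sum_(K in comps A) #|[set cc A' u | u in K]|.
Proof.
move=> sub; pose f (Y : {set V}) := [set v | [exists u in Y, conn A u v]].
have fcc u : f (cc A' u) = cc A u by apply: cc_closure.
rewrite /ncomp -sum1_card (partition_big f (mem (comps A))); last first.
  by move=> Y /imsetP[u _ ->]; rewrite fcc; apply: cc_in_comps.
apply: eq_bigr => K /imsetP[k _ ->].
rewrite -sum1_card; apply: eq_bigl => Y /=.
apply/andP/imsetP => [[/imsetP[u _ ->] /eqP]|[u]].
  by rewrite fcc => /cc_eqP H; exists u => //; rewrite mem_cc conn_sym.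
rewrite mem_cc => H ->; split; first exact: cc_in_comps.
by rewrite fcc; apply/eqP/cc_eqP; rewrite conn_sym.
Qed.

Lemma comps_eq (A B : {set E}) : A \subset B ->
  (forall e, e \in B -> conn A (ends e).1 (ends e).2) -> comps A = comps B.
Proof.
move=> sub H; apply: eq_imset => u; apply/setP => v; rewrite !inE.
by apply/idP/idP; [apply: connS | apply: conn_sub_edges].
Qed.

Lemma ncompS (A B : {set E}) : A \subset B -> ncomp B <= ncomp A.
Proof.
move=> sub; rewrite (ncomp_refine sub) {1}/ncomp -sum1_card.
apply: leq_sum => K /imsetP[u _ ->].
by rewrite card_gt0; apply/set0Pn; exists (cc A u); apply: imset_f; apply: cc_id.
Qed.

Lemma cc_refine_merge (A : {set E}) e :
  [set cc A u | u in cc (e |: A) (ends e).1] = [set cc A (ends e).1; cc A (ends e).2].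
Proof.
apply/setP => Y; apply/imsetP/set2P => [[u]|[->|->]].
- rewrite mem_cc => /conn_setU1; rewrite conn_refl /=.
  case/orP => [H ->|/orP[H|H] ->]; [left|left|right]; apply/cc_eqP => //.
  by rewrite conn_sym.
- by exists (ends e).1; rewrite ?cc_id.
- by exists (ends e).2; rewrite // mem_cc conn_edge ?setU11.
Qed.

Lemma ncomp_merge (A : {set E}) e : ~~ conn A (ends e).1 (ends e).2 ->
  ncomp A = (ncomp (e |: A)).+1.
Proof.
move=> nab; set a := (ends e).1 in nab *; set b := (ends e).2 in nab *.
have sub := subsetU1 e A.
rewrite (ncomp_refine sub) (bigD1 (cc (e |: A) a)) ?cc_in_comps //=.
rewrite cc_refine_merge cards2 -/a -/b.
have -> : cc A a != cc A b by apply/negP => /eqP/cc_eqP; apply/negP.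
rewrite (eq_bigr (fun _ => 1)) ?sum1_card; last first.
  move=> K /andP[/imsetP[u _ ->]] neq.
  have nua : ~~ conn (e |: A) u a by apply: contra neq => H; apply/eqP/cc_eqP.
  apply/eqP/cards1P; exists (cc A u); apply/setP => Y.
  apply/imsetP/set1P => [[x]|->]; last by exists u; rewrite ?cc_id.
  rewrite mem_cc => /conn_setU1 /orP[H ->|/andP[/orP[H|H] _]].
  - by apply/cc_eqP; rewrite conn_sym.
  - by case/negP: nua; apply: connS H.
  - case/negP: nua; apply: conn_trans (connS sub H) _.
    by rewrite conn_sym conn_edge ?setU11.
have := cardsD1 (cc (e |: A) a) (comps (e |: A)); rewrite cc_in_comps /ncomp => ->.
by rewrite add2n add1n; congr _.+2; apply: eq_card => K; rewrite !inE andbC.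
Qed.

Lemma ncomp_setU1 (A : {set E}) e :
  ncomp (e |: A) <= ncomp A <= (ncomp (e |: A)).+1.
Proof.
have [H|H] := boolP (conn A (ends e).1 (ends e).2); last first.
  by rewrite (ncomp_merge H) leqnSn leqnn.
rewrite /ncomp (comps_eq (subsetU1 e A)) ?leqnn ?leqnSn // => f.
by rewrite in_setU1 => /orP[/eqP->//|fA]; apply: conn_edge.
Qed.

Lemma ncomp_setD_le (A B : {set E}) : A \subset B -> ncomp A <= ncomp B + #|B :\: A|.
Proof.
move: {2}#|B :\: A| (erefl #|B :\: A|) => k; elim: k A => [|k IH] A Hk sub.
  move/eqP: Hk; rewrite cards_eq0 setD_eq0 => BA.
  by rewrite (_ : A = B) ?leq_addr //; apply/eqP; rewrite eqEsubset sub.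
have /set0Pn[e] : B :\: A != set0 by rewrite -card_gt0 Hk.
rewrite inE => /andP[eA eB].
have sub' : e |: A \subset B by rewrite subUset sub sub1set eB.
have Hk' : #|B :\: (e |: A)| = k.
  apply/eqP; rewrite -eqSS -Hk (cardsD1 e (B :\: A)) !inE eA eB add1n eqSS.
  by apply/eqP/eq_card => x; rewrite !inE negb_or andbA.
have /andP[_ h] := ncomp_setU1 A e.
by apply: leq_trans h _; rewrite Hk addnS ltnS -Hk'; apply: IH.
Qed.

Lemma ncomp1_conn (A : {set E}) : ncomp A = 1 -> forall u v, conn A u v.
Proof.
move=> /eqP/cards1P[K HK] u v; apply/cc_eqP.
by have := cc_in_comps A u; have := cc_in_comps A v; rewrite HK !inE => /eqP-> /eqP->.
Qed.

Lemma conn_ncomp1 (A : {set E}) (u0 : V) : (forall u v, conn A u v) -> ncomp A = 1.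
Proof.
move=> H; apply/eqP/cards1P; exists (cc A u0); apply/setP => K.
apply/imsetP/set1P => [[u _ ->]|->]; last by exists u0.
by apply/cc_eqP; rewrite conn_sym.
Qed.

Lemma ncomp_set0 : ncomp set0 = #|V|.
Proof.
rewrite /ncomp (_ : comps set0 = [set [set u] | u : V]).
  by rewrite card_imset //; apply: set1_inj.
apply: eq_imset => u; apply/setP => v; rewrite !inE.
by apply/idP/eqP => [/conn_set0 ->|->] //; apply: conn_refl.
Qed.

Lemma ncomp_lt_edge (A B : {set E}) : A \subset B -> ncomp B < ncomp A ->
  exists2 e, e \in B & ~~ conn A (ends e).1 (ends e).2.
Proof.
move=> sub lt; apply/exists_inP; apply: contraLR lt => /exists_inPn H.
by rewrite -leqNgt /ncomp (comps_eq sub) // => e /H; rewrite negbK.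
Qed.

Definition splits (K S : {set V}) := (K :&: S != set0) && (K :\: S != set0).

Lemma conn_setD_cut (A : {set E}) S x y :
  conn (A :\: cut S) x y -> (x \in S) = (y \in S).
Proof.
apply: closed_connect => p q /adj_edge [f]; rewrite !inE => /andP[nc _] [] H;
  by move: nc; rewrite H /= negbK => /eqP.
Qed.

Lemma ncomp_setD_cut (A : {set E}) S :
  ncomp A + \sum_(K in comps A) splits K S <= ncomp (A :\: cut S).
Proof.
set A' := A :\: cut S.
rewrite (ncomp_refine (subsetDl A (cut S))) /ncomp -sum1_card -big_split /=.
apply: leq_sum => K /imsetP[u _ ->].
have [/andP[/set0Pn[x /setIP[xK xS]] /set0Pn[y /setDP[yK yS]]]|_] := boolP (splits _ S).
  rewrite add1n; apply: (@leq_trans #|[set cc A' x; cc A' y]|).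
    rewrite cards2; case: eqP => //= /cc_eqP /conn_setD_cut; rewrite xS.
    by move: yS => /negbTE ->.
  by apply/subset_leq_card/subsetP => Y /set2P[->|->]; apply: imset_f.
by rewrite addn0 card_gt0; apply/set0Pn; exists (cc A' u); apply: imset_f; apply: cc_id.
Qed.

End Components.

Section Kruskal.
Variables (V E : finType) (ends : E -> V * V) (R : realDomainType) (w : E -> R).
Variable e0 : E.
Local Notation conn := (conn ends).
Local Notation ncomp := (ncomp ends).

Definition forest (es : seq E) j := [set x in take j es].

(* A run of Kruskal's algorithm on [H], described by its invariant. *)
Definition kruskal_seq (H : {set E}) (es : seq E) :=
  [/\ {subset es <= H},
      forall i, i < size es ->
        ~~ conn (forest es i) (ends (nth e0 es i)).1 (ends (nth e0 es i)).2 &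
      forall i, i < size es -> forall e, e \in H -> (w e < w (nth e0 es i))%R ->
        conn (forest es i) (ends e).1 (ends e).2].

Lemma forest0 es : forest es 0 = set0.
Proof. by apply/setP => x; rewrite !inE take0. Qed.

Lemma forest_size es : forest es (size es) = [set x in es].
Proof. by rewrite /forest take_size. Qed.

Lemma forest_step es j : j < size es -> forest es j.+1 = nth e0 es j |: forest es j.
Proof.
by move=> lt; apply/setP => x; rewrite /forest (take_nth e0 lt) !inE mem_rcons in_cons.
Qed.

Lemma forestS es i j : i <= j -> forest es i \subset forest es j.
Proof.
move=> ij; apply/subsetP => x; rewrite !inE => xi.
have xes := mem_take xi; rewrite (in_take _ xes) in xi.
by rewrite (in_take _ xes); apply: leq_trans xi ij.
Qed.

Lemma forest_rcons es x i : i <= size es -> forest (rcons es x) i = forest es i.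
Proof. by move=> lt; rewrite /forest -cats1 takel_cat. Qed.

Lemma ncomp_forest H es j : kruskal_seq H es -> j <= size es ->
  ncomp (forest es j) + j = #|V|.
Proof.
case=> _ merge _; elim: j => [|j IH] lt; first by rewrite forest0 ncomp_set0 addn0.
by rewrite (forest_step lt) addnS -(IH (ltnW lt)) (ncomp_merge (merge _ lt)) addSn.
Qed.

Lemma kruskal_uniq H es : kruskal_seq H es -> uniq es.
Proof.
case=> _ merge _; rewrite -(take_size es).
elim: {-2}(size es) (leqnn (size es)) => [|j IH] lt; first by rewrite take0.
rewrite (take_nth e0 lt) rcons_uniq IH ?(ltnW lt) // andbT.
by apply/negP => xin; have := merge _ lt; rewrite conn_edge // inE.
Qed.

Lemma card_forest H es j : kruskal_seq H es -> j <= size es -> #|forest es j| = j.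
Proof.
move=> kH lt; rewrite cardsE; move/card_uniqP: (take_uniq j (kruskal_uniq kH)) => ->.
exact: size_takel.
Qed.

Lemma kruskal_sorted H es i j : kruskal_seq H es -> i <= j -> j < size es ->
  (w (nth e0 es i) <= w (nth e0 es j))%R.
Proof.
move=> [inH merge light] ij jlt; rewrite leNgt; apply/negP => lt.
have ilt : i < size es by apply: leq_ltn_trans ij jlt.
have := light _ ilt (nth e0 es j) (inH _ (mem_nth e0 jlt)) lt.
by move/(connS (forestS es ij)); apply/negP/merge.
Qed.

Lemma kruskal_rcons H es e : kruskal_seq H es -> e \in H ->
  ~~ conn [set x in es] (ends e).1 (ends e).2 ->
  (forall f, f \in H -> ~~ conn [set x in es] (ends f).1 (ends f).2 -> (w e <= w f)%R) ->
  kruskal_seq H (rcons es e).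
Proof.
move=> [inH merge light] eH ne emin; split.
- by move=> x; rewrite mem_rcons in_cons => /orP[/eqP->//|]; apply: inH.
- move=> i; rewrite size_rcons ltnS leq_eqVlt => /orP[/eqP->|ilt].
    by rewrite forest_rcons // forest_size nth_rcons ltnn eqxx.
  by rewrite forest_rcons ?(ltnW ilt) // nth_rcons ilt; apply: merge.
- move=> i; rewrite size_rcons ltnS leq_eqVlt => /orP[/eqP->|ilt] f fH.
    rewrite forest_rcons // forest_size nth_rcons ltnn eqxx => ltf.
    by apply/negPn/negP => nf; have := emin f fH nf; rewrite leNgt ltf.
  by rewrite forest_rcons ?(ltnW ilt) // nth_rcons ilt; apply: light.
Qed.

Lemma kruskal_exists H : exists2 es, kruskal_seq H es & ncomp [set x in es] = ncomp H.
Proof.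
have sub es : kruskal_seq H es -> [set x in es] \subset H.
  by case=> inH _ _; apply/subsetP => x; rewrite inE => /inH.
suff: forall m es, kruskal_seq H es -> ncomp [set x in es] - ncomp H = m ->
    exists2 es, kruskal_seq H es & ncomp [set x in es] = ncomp H.
  by move/(_ _ [::]); apply=> //; split.
elim=> [|m IH] es kH gap.
  exists es => //; apply/eqP.
  by rewrite eqn_leq (ncompS _ (sub _ kH)) andbT -subn_eq0 gap.
have lt : ncomp H < ncomp [set x in es] by rewrite -subn_gt0 gap.
have [e1 e1H ne1] := ncomp_lt_edge (sub _ kH) lt.
pose P f := (f \in H) && ~~ conn [set x in es] (ends f).1 (ends f).2.
have [|e /andP[eH ne] emin] := @arg_minP _ _ _ e1 P w; first by rewrite /P e1H.
apply: (IH (rcons es e)).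
  by apply: kruskal_rcons => // f fH nf; apply: emin; rewrite /P fH.
have -> : [set x in rcons es e] = e |: [set x in es].
  by apply/setP => y; rewrite !inE mem_rcons in_cons.
move: gap; rewrite (ncomp_merge ne) subSn; first by case.
by rewrite -ltnS -(ncomp_merge ne).
Qed.

Definition lighter (A : {set E}) x := [set e in A | (w e < x)%R].

(* The number of edges of [es] lighter than [x], as [es] is sorted by weight. *)
Definition nlighter (es : seq E) x := find (fun e => ~~ (w e < x)%R) es.

Lemma kruskal_lighter H es x i : kruskal_seq H es -> i < size es ->
  (w (nth e0 es i) < x)%R = (i < nlighter es x).
Proof.
move=> kH lt; case: (ltnP i (nlighter es x)) => ik.
  by have := before_find e0 ik => /negbFE.
have klt : nlighter es x < size es by apply: leq_ltn_trans ik lt.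
have := nth_find e0 (a := fun e => ~~ (w e < x)%R) (s := es); rewrite has_find => /(_ klt).
rewrite -leNgt => h; apply/negbTE; rewrite -leNgt.
exact: le_trans h (kruskal_sorted kH ik lt).
Qed.

Lemma lighter_set_kruskal H es x : kruskal_seq H es ->
  lighter [set y in es] x = forest es (nlighter es x).
Proof.
move=> kH; apply/setP => y; rewrite !inE.
have [yes|yes] /= := boolP (y \in es); last by apply/esym/negP => /mem_take; apply/negP.
by rewrite (in_take _ yes) -(kruskal_lighter _ kH) ?index_mem // nth_index.
Qed.

Lemma forest_nlighter_sub H es x : kruskal_seq H es ->
  forest es (nlighter es x) \subset lighter H x.
Proof.
move=> kH; rewrite -(lighter_set_kruskal _ kH); apply/subsetP => y.
by case: kH => inH _ _; rewrite !inE => /andP[/inH -> ->].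
Qed.

Lemma ncomp_forest_nlighter H es x : kruskal_seq H es -> ncomp [set y in es] = ncomp H ->
  ncomp (forest es (nlighter es x)) = ncomp (lighter H x).
Proof.
move=> kH span; have [_ _ light] := kH.
have [klt|] := ltnP (nlighter es x) (size es).
  rewrite /ncomp (comps_eq (forest_nlighter_sub _ kH)) // => e.
  rewrite inE => /andP[eH lte]; apply: light => //; apply: lt_le_trans lte _.
  have := nth_find e0 (a := fun e => ~~ (w e < x)%R) (s := es); rewrite has_find => /(_ klt).
  by rewrite -leNgt.
rewrite leq_eqVlt ltnNge find_size orbF => /eqP ek.
apply/eqP; rewrite eqn_leq (ncompS _ (forest_nlighter_sub x kH)) andbT.
rewrite -ek forest_size span; apply: ncompS.
by apply/subsetP => y; rewrite inE => /andP[].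
Qed.

End Kruskal.

Section SmallSide.
Variables (V E : finType) (ends : E -> V * V) (R : realDomainType) (w : E -> R).
Variable e0 : E.
Local Notation conn := (conn ends).
Local Notation cc := (cc ends).
Local Notation kruskal_seq := (kruskal_seq ends w e0).

Definition small_side (es : seq E) j : {set V} :=
  let P := forest es j in let e := nth e0 es j in
  if #|cc P (ends e).1| <= #|cc P (ends e).2| then cc P (ends e).1 else cc P (ends e).2.

Lemma small_side_cases es j :
  small_side es j = cc (forest es j) (ends (nth e0 es j)).1 \/
  small_side es j = cc (forest es j) (ends (nth e0 es j)).2.
Proof. by rewrite /small_side; case: ifP; [left|right]. Qed.

Lemma small_side_proper H es j : kruskal_seq H es -> j < size es ->
  small_side es j != set0 /\ small_side es j != setT.
Proof.
move=> [_ merge _] lt; have nab := merge j lt.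
case: (small_side_cases es j) => ->; split.
- by apply/set0Pn; exists (ends (nth e0 es j)).1; apply: cc_id.
- apply/negP => /eqP/setP/(_ (ends (nth e0 es j)).2); rewrite !inE => h.
  by move: nab; rewrite h.
- by apply/set0Pn; exists (ends (nth e0 es j)).2; apply: cc_id.
- apply/negP => /eqP/setP/(_ (ends (nth e0 es j)).1); rewrite !inE => h.
  by move: nab; rewrite conn_sym h.
Qed.

(* Components avoiding [c] stay distinct, as the new edge [e] touches the component of [c]. *)
Lemma card_cc_setU1 (P : {set E}) e (K : {set V}) c :
  c = (ends e).1 \/ c = (ends e).2 ->
  #|[set cc P u | u in K] :\ cc P c| <= #|[set cc (e |: P) u | u in K]|.
Proof.
move=> hc; set P' := e |: P; have sub := subsetU1 e P.
pose g (Y : {set V}) := [set v | [exists y in Y, conn P' y v]].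
set X := [set cc P u | u in K] :\ cc P c.
rewrite -(@card_in_imset _ _ g X); last first.
  move=> Y1 Y2; rewrite !inE => /andP[n1 /imsetP[u uK E1]] /andP[n2 /imsetP[v vK E2]].
  subst Y1 Y2.
  rewrite /g !cc_closure // => /cc_eqP /conn_setU1 /orP[H|/andP[H1 H2]].
    by apply/cc_eqP.
  have nu : ~~ conn P u c by apply: contra n1 => h; apply/eqP/cc_eqP.
  have nv : ~~ conn P v c by apply: contra n2 => h; apply/eqP/cc_eqP.
  apply/cc_eqP; case: hc => hc; rewrite hc in nu nv.
  - rewrite (negbTE nu) in H1; rewrite (negbTE nv) in H2.
    by apply: conn_trans H1 _; rewrite conn_sym.
  - rewrite (negbTE nu) orbF in H1; rewrite (negbTE nv) orbF in H2.
    by apply: conn_trans H1 _; rewrite conn_sym.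
apply/subset_leq_card/subsetP => Y /imsetP[Z].
rewrite !inE => /andP[_ /imsetP[u uK ->]] ->.
by rewrite /g cc_closure //; apply: imset_f.
Qed.

Lemma cc_meets (P : {set E}) (K : {set V}) c :
  (cc P c \in [set cc P u | u in K]) = (K :&: cc P c != set0).
Proof.
apply/imsetP/set0Pn => [[u uK /cc_eqP H]|[u /setIP[uK uc]]].
  by exists u; rewrite inE uK mem_cc.
by exists u => //; apply/cc_eqP; rewrite -mem_cc.
Qed.

(* Only a set [K] split by the small side can lose a component at step [j]. *)
Lemma card_cc_forest_step H es j (K : {set V}) : kruskal_seq H es -> j < size es ->
  #|[set cc (forest es j) u | u in K]| <=
  #|[set cc (forest es j.+1) u | u in K]| + splits K (small_side es j).
Proof.
move=> [_ merge _] lt; have nab := merge j lt; have hL := small_side_cases es j.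
move: nab hL; rewrite (forest_step e0 lt).
set P := forest es j; set e := nth e0 es j; set L := small_side es j.
set a := (ends e).1; set b := (ends e).2 => nab hL.
set X := [set cc P u | u in K].
have [mb|mb] := boolP (cc P b \in X); last first.
  rewrite (cardsD1 (cc P b) X) (negbTE mb) add0n.
  by apply: leq_trans (card_cc_setU1 _ _ (or_intror erefl)) (leq_addr _ _).
have [ma|ma] := boolP (cc P a \in X); last first.
  rewrite (cardsD1 (cc P a) X) (negbTE ma) add0n.
  by apply: leq_trans (card_cc_setU1 _ _ (or_introl erefl)) (leq_addr _ _).
have -> : splits K L.
  rewrite /X !cc_meets in ma mb.
  have [u /setIP[uK /[!mem_cc] ua]] := set0Pn _ ma.
  have [v /setIP[vK /[!mem_cc] vb]] := set0Pn _ mb.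
  have nuv : ~~ conn P u v.
    by apply: contra nab => uv; apply: conn_trans ua (conn_trans uv _); rewrite conn_sym.
  rewrite /splits; case: hL => ->; apply/andP; split; apply/set0Pn.
  - by exists u; rewrite !inE uK.
  - exists v; rewrite !inE vK andbT; apply: contra nuv => av.
    by apply: conn_trans av; rewrite conn_sym.
  - by exists v; rewrite !inE vK.
  - exists u; rewrite !inE uK andbT; apply: contra nuv => bu.
    by rewrite conn_sym; apply: conn_trans bu; rewrite conn_sym.
rewrite (cardsD1 (cc P a) X) ma addnC leq_add2r.
exact: (card_cc_setU1 _ _ (or_introl erefl)).
Qed.

Lemma card_cc_small_side H es j v : kruskal_seq H es -> j < size es ->
  v \in small_side es j -> 2 * #|cc (forest es j) v| <= #|cc (forest es j.+1) v|.
Proof.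
move=> [_ merge _] lt; have nab := merge j lt; have hL := small_side_cases es j.
move: nab hL; rewrite (forest_step e0 lt) /small_side.
set P := forest es j; set e := nth e0 es j.
set a := (ends e).1; set b := (ends e).2 => nab hL vL.
have sub := subsetU1 e P.
have eab : conn (e |: P) a b by apply/conn_edge/setU11.
have hv : cc P v = if #|cc P a| <= #|cc P b| then cc P a else cc P b.
  by case: ifP vL => _; rewrite mem_cc => h; apply/esym/cc_eqP.
have disj : cc P a :&: cc P b = set0.
  apply/setP => x; rewrite !inE; apply/negP => /andP[h1 h2]; case/negP: nab.
  by apply: conn_trans h1 _; rewrite conn_sym.
have hva : conn (e |: P) v a.
  case: hL => hL; rewrite hL mem_cc in vL; rewrite conn_sym; first exact: connS vL.
  exact: conn_trans eab (connS sub vL).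
apply: (@leq_trans (#|cc P a| + #|cc P b|)).
  rewrite mul2n -addnn hv; case: ifP => h; first by rewrite leq_add2l.
  by rewrite leq_add2r ltnW // ltnNge h.
rewrite -cardsUI disj cards0 addn0.
apply/subset_leq_card/subsetP => x; rewrite !inE => /orP[] h.
  by apply: conn_trans hva _; apply: connS sub h.
by apply: conn_trans (conn_trans hva eab) _; apply: connS sub h.
Qed.

Lemma small_side_doubling H es j v : kruskal_seq H es -> j <= size es ->
  2 ^ (\sum_(k < j) (v \in small_side es k)) <= #|cc (forest es j) v|.
Proof.
move=> kH; elim: j => [|j IH] lt.
  by rewrite big_ord0 expn0 card_gt0; apply/set0Pn; exists v; apply: cc_id.
rewrite big_ord_recr /=; have [vL|vL] /= := boolP (v \in small_side es j).
  rewrite addn1 expnS; apply: leq_trans (card_cc_small_side kH lt vL).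
  by rewrite leq_mul2l IH // ltnW.
rewrite addn0; apply: leq_trans (IH (ltnW lt)) _; apply/subset_leq_card/subsetP => x.
by rewrite !mem_cc; apply/connS/forestS.
Qed.

End SmallSide.

Lemma leq_telescope (f g : nat -> nat) a b : a <= b ->
  (forall i, a <= i < b -> f i <= f i.+1 + g i) ->
  f a <= f b + \sum_(a <= i < b) g i.
Proof.
elim: b => [|b IH]; first by rewrite leqn0 => /eqP->; rewrite big_geq // addn0.
rewrite leq_eqVlt => /orP[/eqP->|ab step]; first by rewrite big_geq // addn0.
rewrite big_nat_recr //=.
have := step b; rewrite ltnSn andbT => /(_ ab).
have /IH : forall i, a <= i < b -> f i <= f i.+1 + g i.
  by move=> i /andP[ai ib]; apply: step; rewrite ai leqW.
by move=> /(_ ab); lia.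
Qed.

Section SmallCuts.
Variables (V E : finType) (ends : E -> V * V) (R : realDomainType) (w : E -> R).
Variable e0 : E.
Local Notation cc := (cc ends).
Local Notation comps := (comps ends).
Local Notation ncomp := (ncomp ends).
Local Notation cut := (cut ends).
Local Notation kruskal_seq := (kruskal_seq ends w e0).
Local Notation small_side := (small_side ends e0).
Local Notation lighter := (lighter w).
Local Notation nlighter := (nlighter w).

Definition small_cut (es : seq E) j :=
  [set e in cut (small_side es j) | (w e < w (nth e0 es j))%R].

Lemma small_cut_sub H es j : kruskal_seq H es -> j < size es -> small_cut es j \subset ~: H.
Proof.
move=> [_ _ light] lt; apply/subsetP => e; rewrite !inE => /andP[ct lte].
apply/negP => eH; have hab := light _ lt _ eH lte.
by move: ct; case: (small_side_cases ends e0 es j) => ->; rewrite !inE (conn_eqr _ hab) eqxx.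
Qed.

(* Every component of [G_{<x}] breaks into at most [1 + #(small sides splitting it)]
   components of [H_{<x}]: replay the Kruskal steps from [nlighter es x] on. *)
Lemma ncomp_lighter_splits H es x :
  kruskal_seq H es -> ncomp [set y in es] = ncomp H -> ncomp H = 1 ->
  ncomp (lighter H x) <= ncomp (lighter setT x) +
    \sum_(nlighter es x <= j < size es)
       \sum_(K in comps (lighter setT x)) splits K (small_side es j).
Proof.
move=> kH span conH; set A := lighter setT x; set k := nlighter es x.
have subA : forest es k \subset A.
  by apply: subset_trans (forest_nlighter_sub x kH) _; apply/subsetP => e /[!inE] /andP[].
pose M j := \sum_(K in comps A) #|[set cc (forest es j) u | u in K]|.
have Mk : M k = ncomp (lighter H x).
  by rewrite /M -ncomp_refine // (ncomp_forest_nlighter x kH span).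
have Ms : M (size es) = ncomp A.
  rewrite /M /ncomp -sum1_card; apply: eq_bigr => K /imsetP[u _ ->].
  have full v : cc (forest es (size es)) v = setT.
    by apply/setP => y; rewrite !inE forest_size ncomp1_conn // span.
  apply/eqP/cards1P; exists setT; apply/setP => Y.
  by apply/imsetP/set1P => [[v _ ->]|->] //; exists u; rewrite ?cc_id ?full.
rewrite -Mk -Ms; apply: leq_telescope; first exact: find_size.
move=> j /andP[_ lt]; rewrite /M -big_split /=.
by apply: leq_sum => K _; apply: card_cc_forest_step kH lt.
Qed.

Lemma lighter_setC_small_cut H es x j : kruskal_seq H es -> nlighter es x <= j < size es ->
  lighter (~: small_cut es j) x = lighter setT x :\: cut (small_side es j).
Proof.
move=> kH /andP[kj lt].
have hx : ~~ (w (nth e0 es j) < x)%R by rewrite (kruskal_lighter _ kH lt) -leqNgt.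
apply/setP => e; rewrite !inE; have [lex|] //= := boolP (w e < x)%R; rewrite ?andbF //.
rewrite !andbT; congr (~~ _); apply/andb_idr => _.
by apply: lt_le_trans lex _; rewrite leNgt.
Qed.

Lemma ncomp_lighter_small_cuts H es x :
  kruskal_seq H es -> ncomp [set y in es] = ncomp H -> ncomp H = 1 ->
  ncomp (lighter H x) + size es * ncomp (lighter setT x) <=
  ncomp (lighter setT x) + \sum_(j < size es) ncomp (lighter (~: small_cut es j) x).
Proof.
move=> kH span conH; set A := lighter setT x; set k := nlighter es x.
have ks : k <= size es := find_size _ _.
rewrite -(big_mkord xpredT (fun j => ncomp (lighter (~: small_cut es j) x))).
rewrite (big_cat_nat (leq0n k) ks) /= -{1}(subnKC ks) mulnDl.
have below : k * ncomp A <= \sum_(0 <= j < k) ncomp (lighter (~: small_cut es j) x).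
  rewrite -{1}(subn0 k) -sum_nat_const_nat; apply: leq_sum => j _.
  by apply: ncompS; apply/subsetP => e /[!inE] /andP[_ ->].
have above : (size es - k) * ncomp A +
    \sum_(k <= j < size es) \sum_(K in comps A) splits K (small_side es j) <=
    \sum_(k <= j < size es) ncomp (lighter (~: small_cut es j) x).
  rewrite -sum_nat_const_nat -big_split /= big_nat_cond [leqRHS]big_nat_cond.
  apply: leq_sum => j /andP[hj _].
  by rewrite (lighter_setC_small_cut kH hj); apply: ncomp_setD_cut.
have := ncomp_lighter_splits x kH span conH; rewrite -/A -/k; lia.
Qed.

End SmallCuts.

Section LayerCake.
Variables (V E : finType) (ends : E -> V * V) (R : realDomainType) (w : E -> R).
Hypothesis w_ge0 : forall e, (0 <= w e)%R.
Local Notation conn := (conn ends).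
Local Notation ncomp := (ncomp ends).
Local Notation lighter := (lighter w).
Local Open Scope ring_scope.

(* [0] is a level so that the layers of [layer_weight] start at weight [0]. *)
Definition levels := sort <=%R (undup (0 :: [seq w e | e <- enum E])).
Definition nlevels := (size levels).-1.
Definition level j := nth 0 levels j.
Definition gap j := level j.+1 - level j.

(* The MST weight of [(V, A)] as [\int_0^oo (ncomp A_{<x} - 1) dx], a step function
   in [x] that is constant between consecutive levels. *)
Definition layer_weight (A : {set E}) :=
  \sum_(j < nlevels) gap j * ((ncomp (lighter A (level j.+1)))%:R - 1).

Lemma levels_sorted : sorted <%R levels.
Proof. by rewrite /levels sort_lt_sorted undup_uniq. Qed.

Lemma mem_levels y : (y \in levels) = (y \in 0 :: [seq w e | e <- enum E]).
Proof. by rewrite /levels mem_sort mem_undup. Qed.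

Lemma w_in_levels e : w e \in levels.
Proof. by rewrite mem_levels in_cons map_f ?orbT ?mem_enum. Qed.

Lemma level_lt i j : (i < size levels)%N -> (j < size levels)%N ->
  (level i < level j) = (i < j)%N.
Proof.
move=> hi hj; have lt_nth := sorted_ltn_nth lt_trans 0 levels_sorted.
have [ij|ji] := ltnP i j; first exact: lt_nth.
apply/negbTE; rewrite -leNgt; move: ji; rewrite leq_eqVlt => /orP[/eqP->//|ji].
exact/ltW/lt_nth.
Qed.

Lemma level0 : level 0 = 0.
Proof.
have z : (0 : R) \in levels by rewrite mem_levels mem_head.
have szp : (0 < size levels)%N by case: levels z.
apply/eqP; rewrite eq_le; apply/andP; split.
  rewrite -[leRHS](nth_index 0 z) -/(level _).
  have [->//|p0] := posnP (index 0 levels).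
  by apply: ltW; rewrite level_lt ?index_mem.
have : level 0 \in levels by apply: mem_nth.
by rewrite mem_levels in_cons => /orP[/eqP->//|/mapP[e _ ->]].
Qed.

Lemma gap_ge0 j : (j < nlevels)%N -> 0 <= gap j.
Proof.
move=> lt; rewrite subr_ge0 ltW // level_lt //; move: lt; rewrite /nlevels; lia.
Qed.

Lemma sum_gap_levels y : y \in levels ->
  \sum_(j < nlevels) gap j * (~~ (y < level j.+1))%:R = y.
Proof.
move=> yin; set p := index y levels.
have pl : (p < size levels)%N by rewrite index_mem.
have pm : (p <= nlevels)%N by rewrite /nlevels; lia.
rewrite (eq_bigr (fun j : 'I_nlevels => if (j < p)%N then gap j else 0)); last first.
  move=> j _; have jl : (j.+1 < size levels)%N by have := ltn_ord j; rewrite /nlevels; lia.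
  rewrite -(nth_index 0 yin) -/p -/(level p) level_lt // ltnS leqNgt.
  by case: ltnP => _ /=; rewrite ?mulr1 ?mulr0.
rewrite -big_mkcond /= -(big_mkord (fun j => (j < p)%N) gap).
rewrite (big_cat_nat (leq0n p) pm) /= [X in _ + X]big_nat_cond [X in _ + X]big1 ?addr0; last first.
  by move=> j /andP[/andP[h _] h']; move: h'; rewrite ltnNge h.
rewrite big_nat_cond (eq_bigl (fun j => (0 <= j < p)%N && true)); last first.
  by move=> j /=; case: (j < p)%N; rewrite ?andbF ?andbT.
by rewrite -big_nat_cond telescope_sumr // level0 subr0 /level nth_index.
Qed.

Lemma weight_layers (T : {set E}) :
  \sum_(e in T) w e =
  \sum_(j < nlevels) gap j * (#|T|%:R - #|lighter T (level j.+1)|%:R).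
Proof.
under eq_bigr => e _ do rewrite -(sum_gap_levels (w_in_levels e)).
rewrite exchange_big /=; apply: eq_bigr => j _; rewrite -mulr_sumr; congr (_ * _).
rewrite -(cardsID [set e | w e < level j.+1] T) natrD.
have -> : T :&: [set e | w e < level j.+1] = lighter T (level j.+1).
  by apply/setP => e; rewrite !inE.
rewrite addrAC subrr add0r -natr_sum; congr _%:R.
rewrite -sum1_card big_mkcond [RHS]big_mkcond /=; apply: eq_bigr => e _.
by rewrite !inE andbC; case: (e \in T); case: (_ < _).
Qed.

Lemma ncomp_lighter_tree (A T : {set E}) x (u0 : V) : T \subset A ->
  (forall u v, conn T u v) -> #|T| = #|V|.-1 ->
  (#|lighter T x| + ncomp (lighter A x) <= #|T| + 1)%N.
Proof.
move=> sub conT cardT.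
have subT : lighter T x \subset T by apply/subsetP => e /[!inE] /andP[].
have := ncomp_setD_le ends subT; rewrite (conn_ncomp1 u0 conT) (cardsDS subT).
have : (ncomp (lighter A x) <= ncomp (lighter T x))%N.
  by apply: ncompS; apply/subsetP => e /[!inE] /andP[/(subsetP sub) -> ->].
have := subset_leq_card subT; lia.
Qed.

Lemma layer_weight_le_tree (A T : {set E}) (u0 : V) : T \subset A ->
  (forall u v, conn T u v) -> #|T| = #|V|.-1 -> layer_weight A <= \sum_(e in T) w e.
Proof.
move=> sub conT cardT; rewrite weight_layers; apply: ler_sum => j _.
apply: ler_wpM2l; first exact: gap_ge0.
have := ncomp_lighter_tree (level j.+1) u0 sub conT cardT.
by rewrite -(ler_nat R) !natrD lerBrDr; lra.
Qed.

Lemma layer_weight_kruskal (H : {set E}) (e0 : E) : ncomp H = 1 ->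
  exists T : {set E}, [/\ T \subset H, forall u v, conn T u v, #|T| = #|V|.-1 &
                        \sum_(e in T) w e = layer_weight H].
Proof.
move=> conH; have [es kH span] := kruskal_exists ends w e0 H.
have [inH _ _] := kH.
have := ncomp_forest (j := size es) kH (leqnn _); rewrite forest_size span conH => nV.
have cardT : #|[set y in es]| = size es.
  by rewrite cardsE; apply/card_uniqP/(kruskal_uniq kH).
exists [set y in es]; split.
- by apply/subsetP => y; rewrite inE => /inH.
- by apply: ncomp1_conn; rewrite span.
- by rewrite cardT -nV.
rewrite weight_layers; apply: eq_bigr => j _; congr (_ * _).
rewrite (lighter_set_kruskal _ kH) (card_forest kH (find_size _ _)) cardT.
have := ncomp_forest kH (find_size (fun e => ~~ (w e < level j.+1)) es).
rewrite (ncomp_forest_nlighter _ kH span) => h.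
apply/eqP; rewrite subr_eq addrAC eq_sym subr_eq natr1 -!natrD; apply/eqP.
congr _%:R; rewrite /nlighter in h; lia.
Qed.

End LayerCake.

Section SmallCutBounds.
Variables (V E : finType) (ends : E -> V * V) (R : realDomainType) (w : E -> R).
Variable e0 : E.
Local Notation ncomp := (ncomp ends).
Local Notation lighter := (lighter w).
Local Notation kruskal_seq := (kruskal_seq ends w e0).
Local Notation small_side := (small_side ends e0).
Local Notation small_cut := (small_cut ends w e0).
Local Notation layer_weight := (layer_weight ends w).
Local Open Scope ring_scope.

Lemma layer_weightB (A B : {set E}) : layer_weight A - layer_weight B =
  \sum_(j < nlevels w) gap w j *
    ((ncomp (lighter A (level w j.+1)))%:R - (ncomp (lighter B (level w j.+1)))%:R).
Proof.
rewrite -sumrB; apply: eq_bigr => j _; rewrite -mulrBr; congr (_ * _).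
by rewrite opprB addrA subrK.
Qed.

Lemma layer_weight_small_cuts H es :
  kruskal_seq H es -> ncomp [set y in es] = ncomp H -> ncomp H = 1 ->
  layer_weight H - layer_weight setT <=
  \sum_(j < size es) (layer_weight (~: small_cut es j) - layer_weight setT).
Proof.
move=> kH span conH.
rewrite layer_weightB (eq_bigr _ (fun j _ => layer_weightB _ _)) exchange_big /=.
apply: ler_sum => i _; rewrite -mulr_sumr; apply: ler_wpM2l; first exact: gap_ge0.
have := ncomp_lighter_small_cuts (level w i.+1) kH span conH.
rewrite -(ler_nat R) !natrD natrM natr_sum sumrB sumr_const card_ord -mulr_natl.
lra.
Qed.

Definition nsmall (es : seq E) v := (\sum_(j < size es) (v \in small_side es j))%N.

Lemma cost_small_cuts (c : E -> R) H es : kruskal_seq H es -> (forall e, 0 <= c e) ->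
  \sum_(j < size es) \sum_(e in small_cut es j) c e <=
  \sum_(e in ~: H) c e * (nsmall es (ends e).1 + nsmall es (ends e).2)%:R.
Proof.
move=> kH c_ge0.
have step (j : 'I_(size es)) : \sum_(e in small_cut es j) c e <=
    \sum_(e in ~: H) c e *
      (((ends e).1 \in small_side es j) + ((ends e).2 \in small_side es j))%N%:R.
  rewrite big_mkcond [leRHS]big_mkcond /=; apply: ler_sum => e _.
  have [eC|_] := boolP (e \in small_cut es j); last first.
    by case: ifP => // _; rewrite mulr_ge0.
  rewrite (subsetP (small_cut_sub kH (ltn_ord j)) _ eC) -[leLHS]mulr1 ler_wpM2l //.
  move: eC; rewrite !inE ler1n => /andP[].
  by case: ((ends e).1 \in _); case: ((ends e).2 \in _).
apply: le_trans (ler_sum _ (fun j _ => step j)) _.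
rewrite exchange_big /=; apply: ler_sum => e _; rewrite -mulr_sumr.
by rewrite -natr_sum /nsmall -big_split.
Qed.

End SmallCutBounds.

(* Imported only now: the analysis library shadows finset's [set0], [setT], [setCK]. *)
From mathcomp Require Import all_classical all_reals all_analysis.
Import Order.TTheory GRing.Theory Num.Theory.
Local Open Scope ring_scope.

Section MSTWeight.
Variables (R : realType) (V E : finType) (ends : E -> V * V) (w : E -> R).
Hypothesis w_ge0 : forall e, 0 <= w e.

Lemma layer_weight_le_MST (A : {set E}) (u0 : V) :
  ((layer_weight ends w A)%:E <= MST ends w A)%E.
Proof.
apply: Order.POrderTheory.le_bigmin; first exact: leey.
move=> T /and3P[sub /forallP conT /eqP cardT]; rewrite lee_fin.
apply: (layer_weight_le_tree w_ge0 u0 sub) => // u v; exact: (forallP (conT u) v).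
Qed.

Lemma MST_layer_weight (A : {set E}) (u0 : V) (e0 : E) : ncomp ends A = 1 ->
  MST ends w A = (layer_weight ends w A)%:E.
Proof.
move=> conA; apply/le_anti; rewrite layer_weight_le_MST // andbT.
have [T [sub conT cardT <-]] := layer_weight_kruskal w_ge0 e0 conA.
apply: Order.TotalTheory.bigmin_le_cond.
by rewrite /spanning_tree sub cardT eqxx andbT; apply/'forall_forallP => u v; apply: conT.
Qed.

End MSTWeight.

Section Bounds.
Variables (R : realType) (V E : finType) (ends : E -> V * V) (w : E -> R) (e0 : E).
Local Notation kruskal_seq := (kruskal_seq ends w e0).
Local Notation small_cut := (small_cut ends w e0).
Local Notation small_side := (small_side ends e0).

Lemma small_cutE es j :
  small_cut es j = pcut ends w (small_side es j) (w (nth e0 es j)).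
Proof. by []. Qed.

Lemma nsmall_le_log2 H es v : kruskal_seq H es ->
  (nsmall ends e0 es v)%:R <= log2 (#|V|%:R : R).
Proof.
move=> kH; have := small_side_doubling v kH (leqnn (size es)).
move=> /leq_trans /(_ (max_card _)) le_n.
have ln2 : (0 : R) < ln 2 by rewrite ln_gt0 // ltr1n.
rewrite /log2 ler_pdivlMr // mulr_natl -lnXn ?ltr0n //.
rewrite ler_ln ?posrE ?exprn_gt0 ?ltr0n //; last by apply: leq_trans le_n; rewrite expn_gt0.
by rewrite -natrX ler_nat.
Qed.

Lemma cost_small_cuts_log2 (c : E -> R) (F : {set E}) es :
  kruskal_seq (~: F) es -> (forall e, 0 < c e) ->
  \sum_(j < size es) cost c (small_cut es j) <= 2 * cost c F * log2 (#|V|%:R : R).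
Proof.
move=> kH c_gt0; have c_ge0 e := ltW (c_gt0 e).
apply: le_trans (cost_small_cuts kH c_ge0) _; rewrite finset.setCK /cost mulrAC mulrC mulr_suml.
apply: ler_sum => e _; rewrite ler_wpM2l //.
have := nsmall_le_log2 (ends e).1 kH; have := nsmall_le_log2 (ends e).2 kH.
rewrite natrD; lra.
Qed.

Lemma profit_small_cuts (F : {set E}) es (u0 : V) : (forall e, 0 <= w e) ->
  kruskal_seq (~: F) es -> ncomp ends [set y in es] = ncomp ends (~: F) ->
  ncomp ends (~: F) = 1 -> ncomp ends [set: E] = 1 ->
  (profit ends w F <= \sum_(j < size es) profit ends w (small_cut es j))%E.
Proof.
move=> w_ge0 kH span conH conG.
have MG := MST_layer_weight w_ge0 u0 e0 conG.
have profit_ge (j : 'I_(size es)) : ((layer_weight ends w (~: small_cut es j) -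
                     layer_weight ends w [set: E])%:E <= profit ends w (small_cut es j))%E.
  by rewrite /profit MG EFinB leeB // layer_weight_le_MST.
apply: le_trans (lee_sum _ (fun j _ => profit_ge j)).
rewrite sumEFin /profit MG (MST_layer_weight w_ge0 u0 e0 conH) -EFinB lee_fin.
exact: layer_weight_small_cuts kH span conH.
Qed.

End Bounds.

Theorem mainTheorem6 (R : realType) (V E : finType) (ends : E -> V * V)
    (w c : E -> R)
    (loopless : forall e, (ends e).1 != (ends e).2)
    (w_ge0 : forall e, 0 <= w e) (c_gt0 : forall e, 0 < c e)
    (Gconn : connectedE ends [set: E]) (n_ge2 : (2 <= #|V|)%N)
    (F : {set E}) (GFconn : connectedE ends (~: F)) :
  exists t : nat, (t <= #|V|)%N /\
  exists (S : 'I_t.-1 -> {set V}) (W : 'I_t.-1 -> R),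
    (forall i, S i != finset.set0 /\ S i != [set: V]) /\
    \sum_(i < t.-1) cost c (pcut ends w (S i) (W i))
      <= 2 * cost c F * log2 (#|V|%:R) /\
    (\sum_(i < t.-1) profit ends w (pcut ends w (S i) (W i))
      >= profit ends w F)%E.
Proof.
have /card_gt1P[u0 [v0 [_ _ uv]]] := n_ge2.
have [e0 _|noE] := pickP (fun _ : E => true); last first.
  have := Gconn u0 v0; rewrite (_ : [set: E] = finset.set0) => [/conn_set0 huv|].
    by rewrite huv eqxx in uv.
  by apply/setP => e; have := noE e.
have conG : ncomp ends [set: E] = 1 by apply: conn_ncomp1 u0 Gconn.
have conH : ncomp ends (~: F) = 1 by apply: conn_ncomp1 u0 GFconn.
have [es kH span] := kruskal_exists ends w e0 (~: F).
have := ncomp_forest (j := size es) kH (leqnn _); rewrite forest_size span conH => nV.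
exists (size es).+1; split; first by rewrite -nV add1n.
exists (small_side ends e0 es), (fun j => w (nth e0 es j)); split.
  by move=> j; apply: small_side_proper kH (ltn_ord j).
under eq_bigr => j _ do rewrite -small_cutE.
under [in X in (_ <= X)%E]eq_bigr => j _ do rewrite -small_cutE.
split; first exact: cost_small_cuts_log2 kH c_gt0.
exact: profit_small_cuts u0 w_ge0 kH span conH conG.
Qed.
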